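(* Let $n\ge 3$, let $b_1,\dots,b_{n-1}\in\mathbb{C}$, and let $B\in M_n(\mathbb{C})$ be the matrix with $B_{i,i+1}=b_i$, $B_{i+1,i}=-\bar b_i$ for $i=1,\dots,n-1$, and all other entries equal to $0$. Then the operator norm of $B$ satisfies $$\max_{1\le i\le n-2}\sqrt{|b_i|^2+|b_{i+1}|^2}\le\|B\|,\qquad \frac{2}{n}\sum_{i=1}^{n-1}|b_i|\le\|B\|,$$ $$\|B\|\le\max_{1\le i\le n-2}\big(|b_i|+|b_{i+1}|\big),\qquad \|B\|\le 2\cos\Big(\frac{\pi}{n+1}\Big)\max_{1\le i\le n-1}|b_i|.$$ *)

From HB Require Import structures.
From mathcomp Require Import all_boot all_order all_algebra.
From mathcomp Require Import complex.
From mathcomp Require Import all_classical all_reals all_analysis.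
Set Implicit Arguments. Unset Strict Implicit. Unset Printing Implicit Defensive.
Import Order.TTheory GRing.Theory Num.Theory.
Local Open Scope ring_scope.

Definition cmod (R : realType) (z : R[i]) : R :=
  Num.sqrt (complex.Re z ^+ 2 + complex.Im z ^+ 2).

Definition vnorm (R : realType) (n : nat) (x : 'cV[R[i]]_n) : R :=
  Num.sqrt (\sum_(k < n) cmod (x k 0) ^+ 2).

Definition opnorm (R : realType) (n : nat) (A : 'M[R[i]]_n) : R :=
  sup [set r : R | exists x : 'cV[R[i]]_n, vnorm x = 1 /\ r = vnorm (A *m x)].

(* The tridiagonal skew-Hermitian-type matrix: with 0-based indices,
   B_{i,i+1} = b i, B_{i+1,i} = - conj (b i) for i = 0..n-2, other entries 0. *)
Definition tridB (R : realType) (n : nat) (b : nat -> R[i]) : 'M[R[i]]_n :=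
  \matrix_(i < n, j < n)
    if j == i.+1 :> nat then b i
    else if i == j.+1 :> nat then - conjc (b j)
    else 0.

From HB Require Import structures.
From mathcomp Require Import all_boot all_order all_algebra.
From mathcomp Require Import complex.
From mathcomp Require Import all_classical all_reals all_analysis.
From mathcomp Require Import ring zify.
Set Implicit Arguments.
Unset Strict Implicit.
Unset Printing Implicit Defensive.
Import Order.TTheory GRing.Theory Num.Theory.
Local Open Scope ring_scope.

(* Lower bounds: test B on unit vectors.  A basis vector e_(i+1) picks out a
   column of norm sqrt (|b_i|^2 + |b_(i+1)|^2).  For the flat vector x with
   |x_k| = 1/sqrt n and phases chosen so that every term of x^* B x equals
   i |b_k| / n, one gets |x^* B x| = 2/n sum |b_k|, and |x^* B x| <= |Bx| by
   Cauchy-Schwarz.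
   Upper bounds: the entrywise modulus |B| is symmetric, so by Schur's test
   |B| v <= lam v for a positive vector v gives |B| <= lam.  The constant
   vector gives max (|b_i| + |b_(i+1)|), and v_k = sin (k pi / (n + 1)), the
   Perron vector of the path on n vertices, gives 2 cos (pi / (n + 1)) max |b_i|. *)

Section CauchySchwarz.
Variable F : rcfType.

Lemma cauchy_schwarz n (a c : 'I_n -> F) :
  (\sum_j a j * c j) ^+ 2 <= (\sum_j a j ^+ 2) * (\sum_j c j ^+ 2).
Proof.
rewrite -subr_ge0.
pose t j k := a j ^+ 2 * c k ^+ 2 - a j * c j * (a k * c k).
have -> : (\sum_j a j ^+ 2) * (\sum_j c j ^+ 2) - (\sum_j a j * c j) ^+ 2
    = \sum_j \sum_k t j k.
  rewrite expr2 !mulr_suml -sumrB; apply: eq_bigr => j _.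
  by rewrite !mulr_sumr -sumrB.
suff : 0 <= (\sum_j \sum_k t j k) *+ 2 by rewrite pmulrn_lge0.
rewrite mulr2n {2}exchange_big -big_split /=; apply: sumr_ge0 => j _.
rewrite -big_split /=; apply: sumr_ge0 => k _.
have -> : t j k + t k j = (a j * c k - a k * c j) ^+ 2 by rewrite /t; ring.
exact: sqr_ge0.
Qed.

Lemma cauchy_schwarz_weighted n (p v y : 'I_n -> F) :
  (forall j, 0 <= p j) -> (forall j, 0 < v j) ->
  (\sum_j p j * y j) ^+ 2 <= (\sum_j p j * v j) * (\sum_j p j * y j ^+ 2 / v j).
Proof.
move=> p_ge0 v_gt0.
have pv_ge0 j : 0 <= p j * v j by rewrite mulr_ge0 // ltW.
have p_v_ge0 j : 0 <= p j / v j by rewrite divr_ge0 // ltW.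
have pvE j : Num.sqrt (p j * v j) * Num.sqrt (p j / v j) = p j.
  rewrite -sqrtrM // mulrACA divff ?gt_eqF // mulr1 -expr2.
  by rewrite sqrtr_sqr ger0_norm.
have := cauchy_schwarz (fun j => Num.sqrt (p j * v j))
                       (fun j => Num.sqrt (p j / v j) * y j).
under eq_bigr do rewrite mulrA pvE.
under [X in _ <= X * _]eq_bigr do rewrite sqr_sqrtr //.
by under [X in _ <= _ * X]eq_bigr do rewrite exprMn sqr_sqrtr // mulrAC.
Qed.

End CauchySchwarz.

Lemma sum_adjacent_pairs (V : zmodType) n (G : nat -> V) :
  \sum_(r < n) ((if (r.+1 < n)%N then G r else 0) + (if (0 < r)%N then G r.-1 else 0))
  = (\sum_(0 <= i < n - 1) G i) *+ 2.
Proof.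
case: n => [|n]; first by rewrite big_ord0 big_geq ?mul0rn.
rewrite big_split big_ord_recr big_ord_recl /= ltnn addr0 add0r subn1 big_mkord.
by rewrite mulr2n; congr (_ + _); apply: eq_bigr => i _; rewrite ltnS ltn_ord.
Qed.

Section Modulus.
Variable R : realType.
Local Open Scope complex_scope.
Implicit Types z w : R[i].

Lemma cmodE z : (cmod z)%:C = `|z|.
Proof. by rewrite normc_def. Qed.

Lemma cmod_ge0 z : 0 <= cmod z.
Proof. exact: sqrtr_ge0. Qed.

Lemma cmod0 : cmod (0 : R[i]) = 0.
Proof. by apply: complexI; rewrite cmodE normr0. Qed.

Lemma cmod1 : cmod (1 : R[i]) = 1.
Proof. by apply: complexI; rewrite cmodE normr1. Qed.

Lemma cmodi : cmod ('i : R[i]) = 1.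
Proof. by rewrite /cmod /= expr0n add0r expr1n sqrtr1. Qed.

Lemma cmodR (x : R) : cmod x%:C = `|x|.
Proof. by rewrite /cmod /= expr0n addr0 sqrtr_sqr. Qed.

Lemma cmodM z w : cmod (z * w) = cmod z * cmod w.
Proof. by apply: complexI; rewrite rmorphM /= !cmodE normrM. Qed.

Lemma cmodV z : cmod z^-1 = (cmod z)^-1.
Proof. by apply: complexI; rewrite fmorphV /= !cmodE normfV. Qed.

Lemma cmodN z : cmod (- z) = cmod z.
Proof. by apply: complexI; rewrite !cmodE normrN. Qed.

Lemma cmodJ z : cmod z^* = cmod z.
Proof. by case: z => a c; rewrite /cmod /= sqrrN. Qed.

Lemma cmod_eq0 z : (cmod z == 0) = (z == 0).
Proof. by rewrite -(inj_eq (@complexI _)) cmodE normr_eq0. Qed.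

Lemma cmodD z w : cmod (z + w) <= cmod z + cmod w.
Proof. by rewrite -lecR rmorphD /= !cmodE ler_normD. Qed.

Lemma cmod_sum (I : Type) (r : seq I) (P : pred I) (G : I -> R[i]) :
  cmod (\sum_(i <- r | P i) G i) <= \sum_(i <- r | P i) cmod (G i).
Proof.
elim/big_rec2: _ => [|i y1 y2 _ le_y]; first by rewrite cmod0.
by rewrite (le_trans (cmodD _ _)) // lerD2l.
Qed.

Lemma conjc_i_real (c : R) : ('i * c%:C)^* = - ('i * c%:C).
Proof. by apply/eqP; rewrite eq_complex /= !mul0r !mul1r !subr0 !add0r !oppr0 !eqxx. Qed.

Lemma mulcJ z : z * z^* = (cmod z ^+ 2)%:C.
Proof.
case: z => a c; rewrite /cmod /= sqr_sqrtr ?addr_ge0 ?sqr_ge0 //.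
by apply/eqP; rewrite eq_complex /=; apply/andP; split; apply/eqP; ring.
Qed.

End Modulus.

Section OperatorNorm.
Variable R : realType.
Local Open Scope complex_scope.
Implicit Types (n : nat).

Lemma vnorm_ge0 n (x : 'cV[R[i]]_n) : 0 <= vnorm x.
Proof. exact: sqrtr_ge0. Qed.

Lemma sqr_vnorm n (x : 'cV[R[i]]_n) : vnorm x ^+ 2 = \sum_k cmod (x k 0) ^+ 2.
Proof. by rewrite sqr_sqrtr // sumr_ge0 // => k _; rewrite sqr_ge0. Qed.

Lemma vnorm_delta n (j : 'I_n) : vnorm (delta_mx j 0 : 'cV[R[i]]_n) = 1.
Proof.
rewrite /vnorm (bigD1 j) //= big1 => [|k /negPf kj]; last first.
  by rewrite mxE kj cmod0 expr0n.
by rewrite mxE !eqxx cmod1 expr1n addr0 sqrtr1.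
Qed.

Lemma cmod_dot_le n (x y : 'cV[R[i]]_n) :
  cmod (\sum_k (x k 0)^* * y k 0) <= vnorm x * vnorm y.
Proof.
apply: le_trans (cmod_sum _ _ _) _.
have sum_ge0 : 0 <= \sum_k cmod ((x k 0)^* * y k 0).
  by apply: sumr_ge0 => k _; apply: cmod_ge0.
rewrite -ler_sqr ?nnegrE ?mulr_ge0 ?vnorm_ge0 // exprMn !sqr_vnorm.
under eq_bigr do rewrite cmodM cmodJ.
exact: cauchy_schwarz.
Qed.

Lemma schur_test n (A : 'M[R[i]]_n) (v : 'I_n -> R) lam x :
  (forall j, 0 < v j) -> (forall i j, cmod (A i j) = cmod (A j i)) ->
  (forall i, \sum_j cmod (A i j) * v j <= lam * v i) ->
  vnorm (A *m x) <= lam * vnorm x.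
Proof.
case: n A v x => [A v x _ _ _|n A v x v_gt0 A_sym row_le].
  by rewrite /vnorm !big_ord0 sqrtr0 mulr0.
set c := fun i j => cmod (A i j); set y := fun j => cmod (x j 0).
have c_ge0 i j : 0 <= c i j by apply: cmod_ge0.
have lam_ge0 : 0 <= lam.
  rewrite -(pmulr_lge0 _ (v_gt0 ord0)); apply: le_trans (row_le ord0).
  by apply: sumr_ge0 => j _; rewrite mulr_ge0 ?cmod_ge0 // ltW.
have row_sqr_le i : cmod ((A *m x) i 0) ^+ 2 <= lam * v i * \sum_j c i j * y j ^+ 2 / v j.
  apply: (@le_trans _ _ ((\sum_j c i j * y j) ^+ 2)).
    rewrite ler_sqr ?nnegrE ?cmod_ge0 ?sumr_ge0 // => [|j _]; last by rewrite mulr_ge0 ?cmod_ge0.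
    by rewrite mxE; apply: le_trans (cmod_sum _ _ _) _; under eq_bigr do rewrite cmodM.
  apply: le_trans (cauchy_schwarz_weighted _ (c_ge0 i) v_gt0) _.
  rewrite ler_wpM2r ?row_le // sumr_ge0 // => j _.
  by apply: divr_ge0; [exact: mulr_ge0 (c_ge0 i j) (sqr_ge0 _) | exact: ltW].
rewrite -ler_sqr ?nnegrE ?mulr_ge0 ?vnorm_ge0 // exprMn !sqr_vnorm.
apply: le_trans (ler_sum _ (fun i _ => row_sqr_le i)) _.
have -> : \sum_i lam * v i * (\sum_j c i j * y j ^+ 2 / v j)
    = lam * \sum_j (y j ^+ 2 / v j) * \sum_i c j i * v i.
  transitivity (\sum_i \sum_j lam * v i * (c i j * y j ^+ 2 / v j)).
    by apply: eq_bigr => i _; rewrite big_distrr.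
  rewrite exchange_big big_distrr /=; apply: eq_bigr => j _.
  rewrite !big_distrr /=; apply: eq_bigr => i _; rewrite /c A_sym; ring.
rewrite expr2 -mulrA ler_wpM2l // big_distrr /=; apply: ler_sum => j _.
have y_v_ge0 : 0 <= y j ^+ 2 / v j by apply: divr_ge0; [exact: sqr_ge0 | exact: ltW].
apply: le_trans (ler_wpM2l y_v_ge0 (row_le j)) _.
by rewrite mulrCA divfK ?gt_eqF.
Qed.

Lemma opnorm_le n (A : 'M[R[i]]_n) r : (0 < n)%N ->
  (forall x, vnorm x = 1 -> vnorm (A *m x) <= r) -> opnorm A <= r.
Proof.
move=> n_gt0 A_le; apply: ge_sup => [|_ [x [x1 ->]]]; last exact: A_le.
pose e : 'cV[R[i]]_n := delta_mx (Ordinal n_gt0) 0.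
by exists (vnorm (A *m e)), e; rewrite vnorm_delta.
Qed.

(* A [sup] of a set with no upper bound is junk, hence the bound [r]. *)
Lemma vnorm_mulmx_le_opnorm n (A : 'M[R[i]]_n) r x :
  (forall x, vnorm x = 1 -> vnorm (A *m x) <= r) ->
  vnorm x = 1 -> vnorm (A *m x) <= opnorm A.
Proof.
move=> A_le x1; apply: ub_le_sup; last by exists x.
by exists r => _ [y [y1 ->]]; exact: A_le.
Qed.

End OperatorNorm.

Lemma sin_recurrence (R : realType) (t : R) k :
  sin (k.+2%:R * t) + sin (k%:R * t) = 2 * cos t * sin (k.+1%:R * t).
Proof.
have -> : k.+2%:R * t = k.+1%:R * t + t by rewrite -natr1 mulrDl mul1r.
have -> : k%:R * t = k.+1%:R * t - t by rewrite -natr1 mulrDl mul1r addrK.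
by rewrite sinD sinB; ring.
Qed.

Section Phase.
Variable R : realType.
Variable b : nat -> R[i].
Local Open Scope complex_scope.

Definition phase_step k : R[i] :=
  if b k == 0 then 1 else 'i * (b k)^* / (cmod (b k))%:C.

Fixpoint phase k : R[i] := if k is k'.+1 then phase k' * phase_step k' else 1.

Lemma mul_phase_step k : b k * phase_step k = 'i * (cmod (b k))%:C.
Proof.
rewrite /phase_step; case: eqP => [->|/eqP bk_neq0]; first by rewrite cmod0 mul0r mulr0.
have cbk_neq0 : (cmod (b k))%:C != 0 by rewrite (inj_eq (@complexI _)) cmod_eq0.
by rewrite mulrA mulrCA mulcJ rmorphXn /= expr2 mulrA mulfK.
Qed.

Lemma cmod_phase_step k : cmod (phase_step k) = 1.
Proof.
rewrite /phase_step; case: eqP => [_|/eqP bk_neq0]; first exact: cmod1.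
have cbk_neq0 : cmod (b k) != 0 by rewrite cmod_eq0.
by rewrite !cmodM cmodi cmodJ cmodV cmodR ger0_norm ?cmod_ge0 // mul1r divff.
Qed.

Lemma cmod_phase k : cmod (phase k) = 1.
Proof. by elim: k => [|k IH] /=; rewrite ?cmod1 // cmodM IH cmod_phase_step mulr1. Qed.

Lemma conjc_phase_mul k : (phase k)^* * phase k = 1.
Proof. by rewrite mulrC mulcJ cmod_phase expr1n. Qed.

Lemma phase_edge k : (phase k)^* * b k * phase k.+1 = 'i * (cmod (b k))%:C.
Proof. by rewrite /= -mul_phase_step -[RHS]mul1r -(conjc_phase_mul k); ring. Qed.

Lemma phase_edge_conj k :
  (phase k.+1)^* * - (b k)^* * phase k = 'i * (cmod (b k))%:C.
Proof.
have := congr1 conjc (mul_phase_step k); rewrite rmorphM conjc_i_real => conj_step.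
rewrite [phase k.+1]/= rmorphM -[RHS]opprK -conj_step -[RHS]mul1r.
by rewrite -(conjc_phase_mul k); ring.
Qed.

End Phase.

Section Tridiagonal.
Variable R : realType.
Variables (n : nat) (b : nat -> R[i]).
Local Open Scope complex_scope.
Local Notation B := (tridB n b).
Local Notation M := (\big[Num.max/0]_(0 <= i < n - 1) cmod (b i)).

Lemma tridB_row_sum (V : zmodType) (F : R[i] -> nat -> V) (r : 'I_n) :
  (forall k, F 0 k = 0) ->
  \sum_(k < n) F (B r k) k =
    (if (r.+1 < n)%N then F (b r) r.+1 else 0) +
    (if (0 < r)%N then F (- (b r.-1)^*) r.-1 else 0).
Proof.
move=> F0.
under eq_bigr => k _.
  have -> : F (B r k) k =
      (if k == r.+1 :> nat then F (b r) k else 0) +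
      (if k == r.-1 :> nat then if (0 < r)%N then F (- (b k)^*) k else 0 else 0).
    rewrite mxE; have [->|ne1] := eqVneq (k : nat) r.+1.
      by rewrite (_ : r.+1 == r.-1 = false) ?addr0 //; apply/eqP; lia.
    have [rE|ne2] := eqVneq (r : nat) k.+1; first by rewrite rE eqxx add0r.
    by rewrite F0 add0r; case: eqP => // kE; case: ifP => // r0; lia.
  over.
rewrite big_split -!big_mkcond big_ord1_eq.
rewrite (big_ord1_eq _ (fun k => if (0 < r)%N then F (- (b k)^*) k else 0)).
by rewrite (leq_ltn_trans (leq_pred r) (ltn_ord r)).
Qed.

Lemma cmod_tridBC (i j : 'I_n) : cmod (B i j) = cmod (B j i).
Proof.
rewrite !mxE; case: (eqVneq (j : nat) i.+1) => h1; case: (eqVneq (i : nat) j.+1) => h2 //;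
  by [lia | rewrite cmodN cmodJ].
Qed.

Lemma tridB_cmod_row_le (u : nat -> R) (r : 'I_n) :
  (forall k, (k <= n.+1)%N -> 0 <= u k) ->
  \sum_(k < n) cmod (B r k) * u k.+1 <= M * (u r.+2 + u r).
Proof.
move=> u_ge0; rewrite (tridB_row_sum (F := fun z k => cmod z * u k.+1)) => [|k]; last first.
  by rewrite cmod0 mul0r.
have M_ge i : (i < n - 1)%N -> cmod (b i) <= M.
  by move=> lt_i; apply: (le_bigmax_seq _ i); rewrite ?mem_index_iota.
have M_ge0 : 0 <= M by apply: bigmax_ge_id.
have rn := ltn_ord r.
rewrite mulrDr; apply: lerD.
  case: ltnP => r1; last by rewrite mulr_ge0 ?u_ge0.
  by rewrite ler_wpM2r ?u_ge0 ?M_ge //; lia.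
case: ltnP => r0; last by rewrite mulr_ge0 ?u_ge0 //; lia.
by rewrite cmodN cmodJ prednK // ler_wpM2r ?u_ge0 ?M_ge //; lia.
Qed.

Lemma vnorm_tridB_mul_le (u : nat -> R) c x :
  (forall k, (0 < k <= n)%N -> 0 < u k) -> (forall k, (k <= n.+1)%N -> 0 <= u k) ->
  (forall k, (k < n)%N -> u k.+2 + u k <= c * u k.+1) ->
  vnorm (B *m x) <= c * M * vnorm x.
Proof.
move=> u_gt0 u_ge0 u_rec.
apply: (schur_test (v := fun j : 'I_n => u j.+1)) => [j|i j|r].
- by apply: u_gt0; rewrite ltn_ord.
- exact: cmod_tridBC.
apply: le_trans (tridB_cmod_row_le r u_ge0) _.
by rewrite [c * M]mulrC -mulrA ler_wpM2l ?bigmax_ge_id ?u_rec.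
Qed.

Lemma vnorm_tridB_mul_le_opnorm x : vnorm x = 1 -> vnorm (B *m x) <= opnorm B.
Proof.
apply: (vnorm_mulmx_le_opnorm (r := 2 * M)) => y y1.
have := vnorm_tridB_mul_le (u := fun=> 1) (c := 2) y.
by rewrite y1 !mulr1; apply=> // k _; rewrite ?ltr01 ?ler01.
Qed.

Lemma opnorm_tridB_ge0 : (0 < n)%N -> 0 <= opnorm B.
Proof.
move=> n_gt0; have e1 := vnorm_delta R (Ordinal n_gt0).
exact: le_trans (vnorm_ge0 _) (vnorm_tridB_mul_le_opnorm e1).
Qed.

Lemma opnorm_tridB_ge_pair i : (i.+2 < n)%N ->
  Num.sqrt (cmod (b i) ^+ 2 + cmod (b i.+1) ^+ 2) <= opnorm B.
Proof.
move=> lt_i2n; pose j := Ordinal (ltnW lt_i2n).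
have <- : vnorm (B *m delta_mx j 0) = Num.sqrt (cmod (b i) ^+ 2 + cmod (b i.+1) ^+ 2).
  rewrite -colE /vnorm; congr Num.sqrt.
  under eq_bigr do rewrite mxE cmod_tridBC.
  rewrite (tridB_row_sum (F := fun z _ => cmod z ^+ 2)) => [|k]; last by rewrite cmod0 expr0n.
  by rewrite /= lt_i2n cmodN cmodJ addrC.
exact/vnorm_tridB_mul_le_opnorm/vnorm_delta.
Qed.

Lemma tridB_phase_form :
  \sum_(r < n) (phase b r)^* * (B *m \col_(k < n) phase b k) r 0
  = 'i * ((\sum_(0 <= i < n - 1) cmod (b i)) *+ 2)%:C.
Proof.
rewrite raddfMn mulrnAr raddf_sum mulr_sumr -sum_adjacent_pairs.
apply: eq_bigr => r _; rewrite mxE; under eq_bigr do rewrite [X in _ * X]mxE.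
rewrite (tridB_row_sum (F := fun z k => z * phase b k)) => [|k]; last by rewrite mul0r.
rewrite mulrDr; congr (_ + _); case: ifP => // r_gt0; rewrite ?mulr0 //.
  by rewrite mulrA phase_edge.
by rewrite mulrA -(phase_edge_conj b r.-1) prednK.
Qed.

Lemma opnorm_tridB_ge_mean : (0 < n)%N ->
  2 / n%:R * (\sum_(0 <= i < n - 1) cmod (b i)) <= opnorm B.
Proof.
move=> n_gt0; set s := Num.sqrt (n%:R : R).
have s_gt0 : 0 < s by rewrite sqrtr_gt0 ltr0n.
have s2 : s ^+ 2 = n%:R by rewrite sqr_sqrtr ?ler0n.
pose w := \col_(k < n) phase b k; pose x := (s^-1)%:C *: w.
have x1 : vnorm x = 1.
  rewrite /vnorm; under eq_bigr do rewrite !mxE cmodM cmodR cmod_phase mulr1.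
  rewrite sumr_const card_ord ger0_norm ?invr_ge0 ?ltW // exprVn s2.
  by rewrite -[_^-1 *+ n]mulr_natr mulVf ?sqrtr1 // pnatr_eq0 -lt0n.
have <- : cmod (\sum_r (x r 0)^* * (B *m x) r 0) = 2 / n%:R * \sum_(0 <= i < n - 1) cmod (b i).
  have -> : \sum_r (x r 0)^* * (B *m x) r 0
      = ((s^-1)%:C)^* * (s^-1)%:C * \sum_(r < n) (phase b r)^* * (B *m w) r 0.
    rewrite /x -scalemxAr mulr_sumr; apply: eq_bigr => r _.
    by rewrite !mxE rmorphM mulrACA.
  set sigma := \sum_(0 <= i < n - 1) _.
  have sigma_ge0 : 0 <= sigma by apply: sumr_ge0 => i _; apply: cmod_ge0.
  rewrite tridB_phase_form !cmodM cmodJ cmodi !cmodR mul1r.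
  rewrite !ger0_norm ?invr_ge0 ?mulrn_wge0 ?(ltW s_gt0) //.
  by rewrite -[sigma *+ 2]mulr_natl -expr2 exprVn s2 mulrCA mulrA.
apply: le_trans (cmod_dot_le _ _) _.
by rewrite x1 mul1r; apply: vnorm_tridB_mul_le_opnorm.
Qed.

Lemma opnorm_tridB_le_pair : (3 <= n)%N ->
  opnorm B <= \big[Num.max/0]_(0 <= i < n - 2) (cmod (b i) + cmod (b i.+1)).
Proof.
set S := \big[Num.max/0]_(0 <= i < n - 2) _ => n_ge3.
have S_ge i : (i < n - 2)%N -> cmod (b i) + cmod (b i.+1) <= S.
  by move=> lt_i; apply: (le_bigmax_seq _ i); rewrite ?mem_index_iota.
apply: opnorm_le => [|x x1]; first by lia.
suff : vnorm (B *m x) <= S * vnorm x by rewrite x1 mulr1.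
apply: (schur_test (v := fun=> 1)) => [//|i j|r].
  exact: cmod_tridBC.
rewrite (tridB_row_sum (F := fun z _ => cmod z * 1)) => [|k]; last by rewrite cmod0 mul0r.
rewrite !mulr1 cmodN cmodJ; have rn := ltn_ord r.
case: ltnP => r1; case: ltnP => r0.
- by have := S_ge r.-1; rewrite prednK // addrC; apply; lia.
- move: r0; rewrite leqn0 addr0 => /eqP->.
  by apply: le_trans (S_ge 0%N _); rewrite ?lerDl ?cmod_ge0 //; lia.
- have lt_r2 : (r - 2 < n - 2)%N by lia.
  have := S_ge _ lt_r2; rewrite add0r (_ : (r - 2).+1 = r.-1); last by lia.
  by apply: le_trans; rewrite lerDr cmod_ge0.
- lia.
Qed.

Lemma opnorm_tridB_le_cos : (0 < n)%N -> opnorm B <= 2 * cos (pi / n.+1%:R) * M.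
Proof.
move=> n_gt0; set t := pi / n.+1%:R.
have t_gt0 : 0 < t by rewrite divr_gt0 ?pi_gt0.
have kt_le_pi k : (k <= n.+1)%N -> k%:R * t <= pi.
  by move=> le_k; rewrite mulrA ler_pdivrMr // mulrC ler_pM2l ?pi_gt0 ?ler_nat.
have kt_lt_pi k : (k < n.+1)%N -> k%:R * t < pi.
  by move=> lt_k; rewrite mulrA ltr_pdivrMr // mulrC ltr_pM2l ?pi_gt0 ?ltr_nat.
apply: opnorm_le => // x x1.
suff : vnorm (B *m x) <= 2 * cos t * M * vnorm x by rewrite x1 mulr1.
apply: (vnorm_tridB_mul_le (u := fun k => sin (k%:R * t))) => [k /andP[k_gt0 le_kn]|k le_k|k _].
- by apply: sin_gt0_pi; rewrite mulr_gt0 ?ltr0n ?kt_lt_pi.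
- by apply: sin_ge0_pi; rewrite kt_le_pi // andbT mulr_ge0 // ltW.
- by rewrite sin_recurrence.
Qed.

End Tridiagonal.

Theorem mainTheorem3 (R : realType) (n : nat) (hn : (3 <= n)%N) (b : nat -> R[i]) :
  let B := tridB n b in
  [/\ \big[Num.max/0]_(0 <= i < n - 2)
          Num.sqrt (cmod (b i) ^+ 2 + cmod (b i.+1) ^+ 2) <= opnorm B,
      2 / n%:R * (\sum_(0 <= i < n - 1) cmod (b i)) <= opnorm B,
      opnorm B <= \big[Num.max/0]_(0 <= i < n - 2) (cmod (b i) + cmod (b i.+1))
    & opnorm B <= 2 * cos (pi / (n.+1)%:R) *
                  \big[Num.max/0]_(0 <= i < n - 1) cmod (b i)].
Proof.
move=> B; have n_gt0 : (0 < n)%N by apply: leq_trans hn.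
split.
- rewrite big_seq; apply: bigmax_le => [|i]; first exact: opnorm_tridB_ge0.
  by rewrite mem_index_iota => /andP[_ lt_i]; apply: opnorm_tridB_ge_pair; lia.
- exact: opnorm_tridB_ge_mean.
- exact: opnorm_tridB_le_pair.
- exact: opnorm_tridB_le_cos.
Qed.
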